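(* Let $A,r,\beta_0,a,\mu,d>0$ and consider the system $$\dot S=S(A-S)-\beta_0IS,\qquad \dot I=\beta_0IS-(\mu+d)I-\frac{rI}{a+I},\qquad \dot R=\frac{rI}{a+I}-\mu R.$$ Then the region $$\mathcal{M}=\left\{(S,I,R)\in(\mathbb{R}_0^+)^3:\ 0\le S\le A,\ 0\le S+I+R\le \frac{A(\mu+A)}{\mu},\ I,R\ge0\right\}$$ is positively flow-invariant, i.e. every trajectory starting in $\mathcal{M}$ remains in $\mathcal{M}$ for all $t\ge0$.
   Context: $S,I,R$ denote susceptible, infectious and recovered populations; $\mu$ is the natural death rate, $d$ the disease-induced death rate, $r$ the cure rate, $a$ a saturation constant of treatment, $\beta_0$ the transmission rate and $A$ the carrying capacity of susceptibles. $\mathbb{R}_0^+=[0,\infty)$. *)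

From Stdlib Require Import Reals Lra.
Open Scope R_scope.

Definition in_M (A mu S I Rr : R) : Prop :=
  0 <= S /\ S <= A /\ 0 <= I /\ 0 <= Rr /\
  0 <= S + I + Rr /\ S + I + Rr <= A * (mu + A) / mu.

Definition right_continuous_at (f : R -> R) (t0 : R) : Prop :=
  forall eps, 0 < eps -> exists delta, 0 < delta /\
    forall t, t0 <= t < t0 + delta -> Rabs (f t - f t0) < eps.

(* Each of the five quantities S, I, R, A - S and K - (S + I + R), with
   K = A (mu + A) / mu, satisfies an equation x' = x h + q in which q >= 0 once
   the previous quantities are known to be nonnegative; for the last one
   h = -mu and q = (mu + A) (A - S) + S^2 + d I, using mu K = A (mu + A).
   A comparison principle then keeps each of them nonnegative. *)
From Stdlib Require Import Reals.
From Stdlib Require Import Lra Psatz.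
Open Scope R_scope.

Definition near_right (t : R) (P : R -> Prop) : Prop :=
  exists delta, 0 < delta /\ forall s, t <= s < t + delta -> P s.

Lemma near_right_and t (P Q : R -> Prop) :
  near_right t P -> near_right t Q -> near_right t (fun s => P s /\ Q s).
Proof.
  intros [d1 [Hd1 HP]] [d2 [Hd2 HQ]].
  exists (Rmin d1 d2); split; [now apply Rmin_pos|].
  intros s Hs; pose proof (Rmin_l d1 d2); pose proof (Rmin_r d1 d2).
  split; [apply HP | apply HQ]; lra.
Qed.

Lemma near_right_impl t (P Q : R -> Prop) :
  (forall s, P s -> Q s) -> near_right t P -> near_right t Q.
Proof. intros PQ [d [Hd HP]]; exists d; split; auto. Qed.

Lemma near_right_ge t : near_right t (fun s => t <= s).
Proof. exists 1; split; [lra | intros s Hs; lra]. Qed.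

Lemma near_right_lt t u : t < u -> near_right t (fun s => s < u).
Proof. intros Htu; exists (u - t); split; intros; lra. Qed.

Lemma near_right_witness t (P : R -> Prop) :
  near_right t P -> exists s, t < s /\ P s.
Proof. intros [d [Hd HP]]; exists (t + d / 2); split; [|apply HP]; lra. Qed.

Lemma right_continuous_at_bounds f t eps :
  right_continuous_at f t -> 0 < eps ->
  near_right t (fun s => f t - eps < f s < f t + eps).
Proof.
  intros Hf Heps; apply (near_right_impl t (fun s => Rabs (f s - f t) < eps)).
  - intros s Hs; apply Rabs_def2 in Hs; lra.
  - exact (Hf eps Heps).
Qed.

Lemma right_continuous_at_plus f g t :
  right_continuous_at f t -> right_continuous_at g t ->
  right_continuous_at (fun s => f s + g s) t.
Proof.
  intros Hf Hg eps Heps.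
  refine (near_right_impl _ _ _ _
    (near_right_and t _ _ (right_continuous_at_bounds f t (eps / 2) Hf ltac:(lra))
                          (right_continuous_at_bounds g t (eps / 2) Hg ltac:(lra)))).
  intros s [Hfs Hgs]; apply Rabs_def1; lra.
Qed.

Lemma right_continuous_at_const_minus K f t :
  right_continuous_at f t -> right_continuous_at (fun s => K - f s) t.
Proof.
  intros Hf eps Heps; refine (near_right_impl _ _ _ _ (Hf eps Heps)).
  intros s Hs; replace (K - f s - (K - f t)) with (- (f s - f t)) by ring.
  now rewrite Rabs_Ropp.
Qed.

Lemma continuity_pt_near f t eps :
  continuity_pt f t -> 0 < eps ->
  exists delta, 0 < delta /\ forall s, Rabs (s - t) < delta -> Rabs (f s - f t) < eps.
Proof.
  intros Hf Heps; destruct (Hf eps Heps) as [delta [Hdelta Hnear]].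
  exists delta; split; [lra|]; intros s Hs.
  destruct (Req_dec s t) as [-> | Hne].
  - unfold Rminus; rewrite Rplus_opp_r, Rabs_R0; lra.
  - apply (Hnear s); repeat split; auto.
Qed.

Lemma continuity_pt_right_continuous f t :
  continuity_pt f t -> right_continuous_at f t.
Proof.
  intros Hf eps Heps; destruct (continuity_pt_near f t eps Hf Heps) as [delta [Hdelta Hnear]].
  exists delta; split; [exact Hdelta|]; intros s Hs.
  apply Hnear; rewrite Rabs_right; lra.
Qed.

Lemma derivable_right_continuous (x x' : R -> R) :
  (forall t, 0 < t -> derivable_pt_lim x t (x' t)) ->
  right_continuous_at x 0 -> forall t, 0 <= t -> right_continuous_at x t.
Proof.
  intros Hx Hx0 t [Ht | <-]; [|exact Hx0].
  apply continuity_pt_right_continuous, derivable_continuous_pt.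
  exists (x' t); exact (Hx t Ht).
Qed.

Lemma last_zero_before_negative (x : R -> R) t1 :
  (forall t, 0 < t -> continuity_pt x t) ->
  (forall t, 0 <= t -> right_continuous_at x t) ->
  0 <= x 0 -> 0 <= t1 -> x t1 < 0 ->
  exists t0, 0 <= t0 < t1 /\ x t0 = 0 /\ forall s, t0 < s <= t1 -> x s < 0.
Proof.
  intros Hc Hrc Hx0 Ht1 Hxt1.
  set (E := fun t => 0 <= t <= t1 /\ 0 <= x t).
  destruct (completeness E) as [t0 [Hub Hlub]].
  { exists t1; intros y [Hy _]; lra. }
  { exists 0; split; [lra | exact Hx0]. }
  assert (Ht0 : 0 <= t0) by (apply Hub; split; [lra | exact Hx0]).
  assert (Ht0t1 : t0 <= t1) by (apply Hlub; intros y [Hy _]; lra).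
  assert (after : forall s, t0 < s <= t1 -> x s < 0).
  { intros s Hs; destruct (Rlt_le_dec (x s) 0) as [|Hge]; [assumption|].
    assert (s <= t0) by (apply Hub; split; lra); lra. }
  assert (Hge : 0 <= x t0).
  { destruct (Rle_lt_dec 0 (x t0)) as [|Hneg]; [assumption|exfalso].
    destruct Ht0 as [Hpos | <-]; [|lra].
    destruct (continuity_pt_near x t0 (- x t0) (Hc t0 Hpos)) as [delta [Hdelta Hnear]];
      [lra|].
    enough (t0 <= t0 - delta / 2) by lra.
    apply Hlub; intros y [Hy Hxy].
    assert (y <= t0) by (apply Hub; split; assumption).
    destruct (Rle_lt_dec y (t0 - delta / 2)) as [|Hy']; [assumption|exfalso].
    assert (Hxy' : Rabs (x y - x t0) < - x t0) by (apply Hnear; rewrite Rabs_left1; lra).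
    apply Rabs_def2 in Hxy'; lra. }
  assert (Hlt : t0 < t1) by (destruct Ht0t1 as [|Heq]; [assumption | subst; lra]).
  assert (Hle : x t0 <= 0).
  { destruct (Rle_lt_dec (x t0) 0) as [|Hpos]; [assumption|exfalso].
    destruct (near_right_witness t0 _
      (near_right_and t0 _ _ (right_continuous_at_bounds x t0 (x t0) (Hrc t0 Ht0) Hpos)
                             (near_right_lt t0 t1 Hlt))) as [s [Hs [[Hxs _] Hst1]]].
    assert (x s < 0) by (apply after; lra); lra. }
  exists t0; repeat split; auto; lra.
Qed.

Lemma Rdiv_nonneg_pos u v : 0 <= u -> 0 < v -> 0 <= u / v.
Proof. intros Hu Hv; apply Rmult_le_pos; [exact Hu | left; now apply Rinv_0_lt_compat]. Qed.

Lemma exp_le_1 u : u <= 0 -> exp u <= 1.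
Proof.
  rewrite <- exp_0; intros [Hu | ->]; [left; now apply exp_increasing | right; reflexivity].
Qed.

Lemma exp_scaled_nondecreasing (x x' : R -> R) M s t :
  s < t ->
  (forall c, s <= c <= t -> derivable_pt_lim x c (x' c)) ->
  (forall c, s <= c <= t -> M * x c <= x' c) ->
  x s * exp (- M * s) <= x t * exp (- M * t).
Proof.
  intros Hst Hx Hx'.
  set (w := fun c => x c * exp (- M * c)).
  destruct (MVT_cor2 w (fun c => x' c * exp (- M * c) + x c * (exp (- M * c) * (- M * 1)))
              s t Hst) as [c [Hw Hc]].
  { intros c Hc; apply (derivable_pt_lim_mult x (fun c => exp (- M * c))); [now apply Hx|].
    apply (derivable_pt_lim_comp (fun c => - M * c) exp).
    - apply (derivable_pt_lim_scal id), derivable_pt_lim_id.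
    - apply derivable_pt_lim_exp. }
  assert (Hslope : 0 <= (x' c - M * x c) * exp (- M * c)).
  { apply Rmult_le_pos; [assert (M * x c <= x' c) by (apply Hx'; lra); lra |].
    left; apply exp_pos. }
  change (w s <= w t); nra.
Qed.

(* At the last zero t0 before x turns negative, x' >= M x, so x e^{-M t} is
   nondecreasing just after t0, which is incompatible with x(t0) = 0. *)
Lemma nonneg_invariant (x h q : R -> R) :
  (forall t, 0 < t -> derivable_pt_lim x t (x t * h t + q t)) ->
  (forall t, 0 < t -> 0 <= q t) ->
  right_continuous_at x 0 ->
  (forall t, 0 <= t -> x t = 0 -> exists M, near_right t (fun s => h s <= M)) ->
  0 <= x 0 -> forall t, 0 <= t -> 0 <= x t.
Proof.
  intros Hx Hq Hx0 Hh Hinit t1 Ht1.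
  destruct (Rle_lt_dec 0 (x t1)) as [|Hneg]; [assumption|exfalso].
  assert (Hrc := derivable_right_continuous x _ Hx Hx0).
  assert (Hc : forall t, 0 < t -> continuity_pt x t).
  { intros t Ht; apply derivable_continuous_pt; exists (x t * h t + q t); now apply Hx. }
  destruct (last_zero_before_negative x t1 Hc Hrc Hinit Ht1 Hneg)
    as [t0 [[Ht0 Ht0t1] [Hzero after]]].
  destruct (Hh t0 Ht0 Hzero) as [M0 [delta [Hdelta HM0]]].
  set (M := Rmax M0 0).
  assert (HM : M0 <= M /\ 0 <= M) by (split; [apply Rmax_l | apply Rmax_r]).
  set (t2 := t0 + Rmin delta (t1 - t0) / 2).
  assert (Ht2 : t0 < t2 <= t1 /\ t2 < t0 + delta).
  { pose proof (Rmin_l delta (t1 - t0)); pose proof (Rmin_r delta (t1 - t0)).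
    assert (0 < Rmin delta (t1 - t0)) by (apply Rmin_pos; lra).
    unfold t2; lra. }
  assert (Hslope : forall c, t0 < c <= t2 -> M * x c <= x c * h c + q c).
  { intros c Hc'.
    assert (x c < 0) by (apply after; lra).
    assert (h c <= M0) by (apply HM0; lra).
    assert (0 <= q c) by (apply Hq; lra).
    nra. }
  set (eps := - x t2 * exp (- M * t2)).
  assert (Heps : 0 < eps).
  { assert (x t2 < 0) by (apply after; lra).
    pose proof (exp_pos (- M * t2)); unfold eps; nra. }
  destruct (near_right_witness t0 _
    (near_right_and t0 _ _ (right_continuous_at_bounds x t0 eps (Hrc t0 Ht0) Heps)
                           (near_right_lt t0 t2 (proj1 (proj1 Ht2)))))
    as [s [Hs [[Hxs _] Hst2]]].
  assert (Hw : x s * exp (- M * s) <= x t2 * exp (- M * t2)).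
  { apply (exp_scaled_nondecreasing x (fun c => x c * h c + q c)); [lra | |].
    - intros c Hc'; apply Hx; lra.
    - intros c Hc'; apply Hslope; lra. }
  assert (x s < 0) by (apply after; lra).
  assert (exp (- M * s) <= 1) by (apply exp_le_1; nra).
  pose proof (exp_pos (- M * s)).
  rewrite Hzero in Hxs; unfold eps in *; nra.
Qed.

Section SIR_invariance.

Variables (A r beta0 a mu d : R) (S I Rr : R -> R).
Hypotheses (Hr : 0 <= r) (Hbeta0 : 0 <= beta0) (Ha : 0 < a) (Hmu : 0 < mu) (Hd : 0 <= d).
Hypothesis HS : forall t, 0 < t ->
  derivable_pt_lim S t (S t * (A - S t) - beta0 * I t * S t).
Hypothesis HI : forall t, 0 < t ->
  derivable_pt_lim I t (beta0 * I t * S t - (mu + d) * I t - r * I t / (a + I t)).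
Hypothesis HR : forall t, 0 < t ->
  derivable_pt_lim Rr t (r * I t / (a + I t) - mu * Rr t).
Hypotheses (HS0 : right_continuous_at S 0) (HI0 : right_continuous_at I 0)
  (HR0 : right_continuous_at Rr 0).
Hypotheses (S0_nonneg : 0 <= S 0) (I0_nonneg : 0 <= I 0) (R0_nonneg : 0 <= Rr 0)
  (S0_le : S 0 <= A) (N0_le : S 0 + I 0 + Rr 0 <= A * (mu + A) / mu).

Lemma S_right_continuous t : 0 <= t -> right_continuous_at S t.
Proof. exact (derivable_right_continuous S _ HS HS0 t). Qed.

Lemma I_right_continuous t : 0 <= t -> right_continuous_at I t.
Proof. exact (derivable_right_continuous I _ HI HI0 t). Qed.

Lemma S_nonneg t : 0 <= t -> 0 <= S t.
Proof.
  apply (nonneg_invariant S (fun s => A - S s - beta0 * I s) (fun _ => 0));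
    [| intros; lra | exact HS0 | | exact S0_nonneg].
  - intros s Hs; replace (S s * (A - S s - beta0 * I s) + 0)
      with (S s * (A - S s) - beta0 * I s * S s) by ring; auto.
  - intros t0 Ht0 _; exists (A - (S t0 - 1) - beta0 * (I t0 - 1)).
    refine (near_right_impl _ _ _ _ (near_right_and t0 _ _
      (right_continuous_at_bounds S t0 1 (S_right_continuous t0 Ht0) Rlt_0_1)
      (right_continuous_at_bounds I t0 1 (I_right_continuous t0 Ht0) Rlt_0_1))).
    intros s [[HSs _] [HIs _]]; nra.
Qed.

Lemma I_nonneg t : 0 <= t -> 0 <= I t.
Proof.
  apply (nonneg_invariant I (fun s => beta0 * S s - (mu + d) - r / (a + I s)) (fun _ => 0));
    [| intros; lra | exact HI0 | | exact I0_nonneg].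
  - intros s Hs; replace (I s * (beta0 * S s - (mu + d) - r / (a + I s)) + 0)
      with (beta0 * I s * S s - (mu + d) * I s - r * I s / (a + I s))
      by (unfold Rdiv; ring); auto.
  - intros t0 Ht0 HIt0; exists (beta0 * (S t0 + 1) - (mu + d)).
    refine (near_right_impl _ _ _ _ (near_right_and t0 _ _
      (right_continuous_at_bounds S t0 1 (S_right_continuous t0 Ht0) Rlt_0_1)
      (right_continuous_at_bounds I t0 a (I_right_continuous t0 Ht0) Ha))).
    intros s [[_ HSs] [HIs _]]; rewrite HIt0 in HIs.
    assert (0 <= r / (a + I s)) by (apply Rdiv_nonneg_pos; lra).
    nra.
Qed.

Lemma R_nonneg t : 0 <= t -> 0 <= Rr t.
Proof.
  apply (nonneg_invariant Rr (fun _ => - mu) (fun s => r * I s / (a + I s)));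
    [| | exact HR0 | | exact R0_nonneg].
  - intros s Hs; replace (Rr s * - mu + r * I s / (a + I s))
      with (r * I s / (a + I s) - mu * Rr s) by ring; auto.
  - intros s Hs; assert (0 <= I s) by (apply I_nonneg; lra).
    apply Rdiv_nonneg_pos; nra.
  - intros t0 _ _; exists (- mu).
    refine (near_right_impl _ _ _ _ (near_right_ge t0)); intros; lra.
Qed.

Lemma S_le_A t : 0 <= t -> S t <= A.
Proof.
  intros Ht; enough (0 <= A - S t) by lra.
  refine (nonneg_invariant (fun s => A - S s) (fun s => - S s) (fun s => beta0 * I s * S s)
            _ _ (right_continuous_at_const_minus A S 0 HS0) _ ltac:(lra) t Ht).
  - intros s Hs; replace ((A - S s) * - S s + beta0 * I s * S s)
      with (0 - (S s * (A - S s) - beta0 * I s * S s)) by ring.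
    exact (derivable_pt_lim_minus (fct_cte A) S s _ _ (derivable_pt_lim_const A s) (HS s Hs)).
  - intros s Hs; assert (0 <= I s) by (apply I_nonneg; lra).
    assert (0 <= S s) by (apply S_nonneg; lra); cbv beta.
    apply Rmult_le_pos; [apply Rmult_le_pos |]; lra.
  - intros t0 Ht0 _; exists 0.
    refine (near_right_impl _ _ _ _ (near_right_ge t0)); intros s Hs.
    assert (0 <= S s) by (apply S_nonneg; lra); lra.
Qed.

Lemma total_le t : 0 <= t -> S t + I t + Rr t <= A * (mu + A) / mu.
Proof.
  intros Ht; set (K := A * (mu + A) / mu).
  assert (HK : K * mu = A * (mu + A)) by (unfold K; field; lra).
  enough (0 <= K - (S t + I t + Rr t)) by lra.
  refine (nonneg_invariant (fun s => K - (S s + I s + Rr s)) (fun _ => - mu)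
            (fun s => (mu + A) * (A - S s) + S s ^ 2 + d * I s)
            _ _ _ _ ltac:(unfold K in *; lra) t Ht).
  - intros s Hs.
    pose proof (derivable_pt_lim_minus (fct_cte K) (S + I + Rr)%F s _ _
      (derivable_pt_lim_const K s)
      (derivable_pt_lim_plus _ _ s _ _
         (derivable_pt_lim_plus _ _ s _ _ (HS s Hs) (HI s Hs)) (HR s Hs))) as HN.
    match type of HN with derivable_pt_lim _ _ ?v =>
      replace (_ * - mu + _) with v by (unfold Rdiv; nra) end.
    exact HN.
  - intros s Hs; assert (0 <= I s) by (apply I_nonneg; lra).
    assert (S s <= A) by (apply S_le_A; lra); nra.
  - apply right_continuous_at_const_minus, right_continuous_at_plus;
      [apply right_continuous_at_plus |]; assumption.
  - intros t0 _ _; exists (- mu).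
    refine (near_right_impl _ _ _ _ (near_right_ge t0)); intros; lra.
Qed.

Lemma in_M_invariant t : 0 <= t -> in_M A mu (S t) (I t) (Rr t).
Proof.
  intros Ht.
  pose proof (S_nonneg t Ht); pose proof (I_nonneg t Ht); pose proof (R_nonneg t Ht).
  pose proof (S_le_A t Ht); pose proof (total_le t Ht).
  unfold in_M; repeat split; lra.
Qed.

End SIR_invariance.

Theorem lemma3p1 (A r beta0 a mu d : R) (S I Rr : R -> R) :
  0 < A -> 0 < r -> 0 < beta0 -> 0 < a -> 0 < mu -> 0 < d ->
  (* (S, I, Rr) solves the system on t > 0 ... *)
  (forall t, 0 < t ->
     derivable_pt_lim S t (S t * (A - S t) - beta0 * I t * S t)) ->
  (forall t, 0 < t ->
     derivable_pt_lim I t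
       (beta0 * I t * S t - (mu + d) * I t - r * I t / (a + I t))) ->
  (forall t, 0 < t ->
     derivable_pt_lim Rr t (r * I t / (a + I t) - mu * Rr t)) ->
  (* ... and is continuous on [0, +oo) *)
  right_continuous_at S 0 -> right_continuous_at I 0 ->
  right_continuous_at Rr 0 ->
  in_M A mu (S 0) (I 0) (Rr 0) ->
  forall t, 0 <= t -> in_M A mu (S t) (I t) (Rr t).
Proof.
  intros _ Hr Hbeta0 Ha Hmu Hd HS HI HR HS0 HI0 HR0 [S0 [S0_le [I0 [R0 [_ N0]]]]].
  exact (in_M_invariant A r beta0 a mu d S I Rr (Rlt_le _ _ Hr) (Rlt_le _ _ Hbeta0) Ha Hmu
           (Rlt_le _ _ Hd) HS HI HR HS0 HI0 HR0 S0 I0 R0 S0_le N0).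
Qed.
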